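(* Let $X\in\mathfrak{W}$. If $X(1)=0$ and $XL_{z_k}=L_{z_k}X$ on $\mathfrak{H}^1$ for every $k\ge1$, then $X=0$.
   Context: Let $\mathfrak{H}=\mathbb{Q}\langle x,y\rangle$, $\mathfrak{H}^1=\mathbb{Q}+\mathfrak{H}y$; $L_w(w')=ww'$; $z_k=x^{k-1}y$. The harmonic product $\ast$ on $\mathfrak{H}^1$ is the $\mathbb{Q}$-bilinear map with $1\ast w=w\ast1=w$ and $z_kw\ast z_lw'=z_k(w\ast z_lw')+z_l(z_kw\ast w')+z_{k+l}(w\ast w')$; $\mathcal{H}_w(v)=w\ast v$; $\mathfrak{W}$ is the $\mathbb{Q}$-span of the operators $\mathcal{H}_w$ ($w\in\mathfrak{H}^1$) on $\mathfrak{H}^1$. *)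

From HB Require Import structures.
From mathcomp Require Import all_boot all_order all_algebra.
Set Implicit Arguments. Unset Strict Implicit. Unset Printing Implicit Defensive.
Import Order.TTheory GRing.Theory Num.Theory.
Local Open Scope ring_scope.

Definition letter := bool.
Definition lx : letter := false.
Definition ly : letter := true.
Definition word := seq letter.

(* z_k = x^(k-1) y  (meaningful for k >= 1) *)
Definition zletter (k : nat) : word := rcons (nseq k.-1 lx) ly.
Definition zword (ks : seq nat) : word := flatten (map zletter ks).

(* An element of H^1 is given by a finite formal Q-linear combination
   sum_i c_i z_{ks_i}, represented as a list of pairs (c_i, ks_i).
   Its coefficient on a word u of H = Q<x,y>: *)
Definition H1elt := seq (rat * seq nat).
Definition coef (p : H1elt) (u : word) : rat :=
  \sum_(t <- p) (if zword t.2 == u then t.1 else 0).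
Definition eqH (p q : H1elt) : Prop := forall u : word, coef p u = coef q u.
(* well-formedness: all indices k >= 1, so the element lies in H^1 *)
Definition wfH1 (p : H1elt) : bool := all (fun t => all (leq 1) t.2) p.

Definition oneH : H1elt := [:: (1, [::])].
Definition zeroH : H1elt := [::].

Definition consT (a : nat) (p : H1elt) : H1elt := [seq (t.1, a :: t.2) | t <- p].

(* harmonic product of the words z_{s} and z_{t} *)
Fixpoint harm (s : seq nat) : seq nat -> H1elt :=
  match s with
  | [::] => fun t => [:: (1, t)]
  | a :: s' => fix harm_t (t : seq nat) : H1elt :=
      match t with
      | [::] => [:: (1, s)]
      | b :: t' => consT a (harm s' t) ++ consT b (harm_t t')
                   ++ consT (a + b)%N (harm s' t')
      end
  end.

Definition hprod (p q : H1elt) : H1elt :=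
  flatten [seq [seq (t.1 * u.1 * e.1, e.2) | e <- harm t.2 u.2] | t <- p, u <- q].

Definition Hop (w : H1elt) (v : H1elt) : H1elt := hprod w v.

(* An element of frak W: Q-linear combination sum_i c_i H_{w_i},
   represented as a list of pairs (c_i, w_i). *)
Definition Wop := seq (rat * H1elt).
Definition Wapp (X : Wop) (v : H1elt) : H1elt :=
  flatten [seq [seq (i.1 * e.1, e.2) | e <- Hop i.2 v] | i <- X].
Definition wfW (X : Wop) : bool := all (fun i => wfH1 i.2) X.

Definition Lz (k : nat) (v : H1elt) : H1elt := consT k v.

From mathcomp Require Import all_boot all_order all_algebra.
Import GRing.Theory.
Local Open Scope ring_scope.

(* Elements of H^1 are finite Q-linear combinations of the
   monomials z_{k_1} ... z_{k_r} (k_i >= 1), and every X in W acts linearly.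
   Hence it suffices to show that X kills every such monomial, which goes by
   induction on r: X(1) = 0 by hypothesis, and
     X(z_k w) = X (L_{z_k} w) = L_{z_k} (X w) = L_{z_k} 0 = 0.
   The file first computes the coefficients of the list-based operations
   (concatenation, scaling, harmonic product, application of X and of L_{z_k}),
   derives from them that X is linear and that L_{z_k} maps 0 to 0, then
   proves the monomial statement by induction and concludes by linearity. *)

Lemma coef_flatten (ss : seq H1elt) (u : word) :
  coef (flatten ss) u = \sum_(s <- ss) coef s u.
Proof. by rewrite /coef big_flatten. Qed.

Lemma coef_scale (c : rat) (s : H1elt) (u : word) :
  coef [seq (c * e.1, e.2) | e <- s] u = c * coef s u.
Proof.
rewrite /coef big_map mulr_sumr; apply: eq_bigr => e _ /=.
by case: ifP; rewrite ?mulr0.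
Qed.

Lemma coef_hprod (p q : H1elt) (u : word) :
  coef (hprod p q) u =
  \sum_(t <- p) \sum_(w <- q) t.1 * w.1 * coef (harm t.2 w.2) u.
Proof.
rewrite /hprod coef_flatten big_flatten /= big_map; apply: eq_bigr => t _.
by rewrite big_map; apply: eq_bigr => w _; rewrite coef_scale.
Qed.

Lemma coef_hprod_linear (p q : H1elt) (u : word) :
  coef (hprod p q) u = \sum_(w <- q) w.1 * coef (hprod p [:: (1, w.2)]) u.
Proof.
rewrite coef_hprod exchange_big /=; apply: eq_bigr => w _.
rewrite coef_hprod mulr_sumr; apply: eq_bigr => t _.
by rewrite big_seq1 /= mulr1 mulrA [w.1 * _]mulrC.
Qed.

Lemma coef_Wapp (X : Wop) (v : H1elt) (u : word) :
  coef (Wapp X v) u = \sum_(i <- X) i.1 * coef (hprod i.2 v) u.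
Proof.
rewrite /Wapp coef_flatten big_map; apply: eq_bigr => i _.
by rewrite coef_scale.
Qed.

Lemma coef_Wapp_linear (X : Wop) (v : H1elt) (u : word) :
  coef (Wapp X v) u = \sum_(w <- v) w.1 * coef (Wapp X [:: (1, w.2)]) u.
Proof.
under [RHS]eq_bigr => w _ do rewrite coef_Wapp mulr_sumr.
rewrite coef_Wapp exchange_big /=; apply: eq_bigr => i _.
rewrite coef_hprod_linear mulr_sumr; apply: eq_bigr => w _.
by rewrite mulrCA.
Qed.

Lemma cat_eq_split (a w u : word) :
  (a ++ w == u) = (take (size a) u == a) && (w == drop (size a) u).
Proof.
apply/eqP/andP => [<-|[/eqP Ha /eqP Hw]].
  by rewrite take_size_cat // drop_size_cat.
by rewrite -(cat_take_drop (size a) u) Ha Hw.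
Qed.

Lemma coef_consT (a : nat) (p : H1elt) (u : word) :
  coef (consT a p) u =
  if take (size (zletter a)) u == zletter a
  then coef p (drop (size (zletter a)) u) else 0.
Proof.
rewrite /coef /consT big_map.
case: ifP => Hpre; last by rewrite big1 // => t _; rewrite /= cat_eq_split Hpre.
by apply: eq_bigr => t _; rewrite /= cat_eq_split Hpre.
Qed.

Lemma Lz_zero (a : nat) (p : H1elt) : eqH p zeroH -> eqH (Lz a p) zeroH.
Proof.
by move=> p0 u; rewrite /Lz coef_consT p0 /coef /zeroH !big_nil if_same.
Qed.

Section VanishingOnMonomials.

Variable X : Wop.
Hypothesis X_one : eqH (Wapp X oneH) zeroH.
Hypothesis X_comm : forall k : nat, (1 <= k)%N -> forall v : H1elt, wfH1 v ->
  eqH (Wapp X (Lz k v)) (Lz k (Wapp X v)).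

Lemma Wapp_monomial_zero (ks : seq nat) :
  all (leq 1) ks -> eqH (Wapp X [:: (1, ks)]) zeroH.
Proof.
elim: ks => [_|a ks IH /andP [a_pos ks_pos]]; first exact: X_one.
have mono_wf : wfH1 [:: (1, ks)] by rewrite /wfH1 /= andbT.
move=> u; rewrite -[[:: _]]/(Lz a [:: (1, ks)]) (X_comm _ a_pos _ mono_wf).
exact: Lz_zero (IH ks_pos) u.
Qed.

End VanishingOnMonomials.

(* By linearity, X vanishes on all of H^1. *)
Theorem mainTheorem15 (X : Wop) (hX : wfW X) :
  eqH (Wapp X oneH) zeroH ->
  (forall k : nat, (1 <= k)%N -> forall v : H1elt, wfH1 v ->
     eqH (Wapp X (Lz k v)) (Lz k (Wapp X v))) ->
  forall v : H1elt, wfH1 v -> eqH (Wapp X v) zeroH.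
Proof.
move=> X_one X_comm v /allP v_wf u.
rewrite coef_Wapp_linear [RHS]/coef big_nil big_seq big1 // => w w_in_v.
have X_w := @Wapp_monomial_zero X X_one X_comm _ (v_wf w w_in_v).
by rewrite X_w /coef big_nil mulr0.
Qed.
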